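(* For every graph $G=(V,E)$, $\rho_T(G)=\widehat{\Theta}(G)$.
   Context: Graphs are finite and simple. A graph $G=(V,E)$ is a threshold graph if there exist weights $w:V\to\mathbb{R}$ and a real number $s$ such that for all distinct $i,j\in V$: $w(i)+w(j)\ge s$ iff $ij\in E$. The threshold graph intersection number $\widehat{\Theta}(G)$ is the least $k\ge 1$ such that there exist threshold graphs $(V,E_1),\dots,(V,E_k)$ on the same vertex set with $E_1\cap\dots\cap E_k=E$. For $u,v\in(\mathbb{R}\cup\{\infty\})^k$ the min-plus tropical dot product is $u\odot v=\min_i(u_i+v_i)$. A min-plus $k$-tropical dot product representation of $G$ is a map $f:V\to(\mathbb{R}\cup\{\infty\})^k$ with a threshold $t>0$ such that for all distinct $x,y\in V$: $xy\in E$ iff $f(x)\odot f(y)\ge t$. $\rho_T(G)$ is the least $k\ge 1$ for which such a representation exists. *)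

From HB Require Import structures.
From mathcomp Require Import all_boot all_order all_algebra.
From mathcomp Require Import reals.
Set Implicit Arguments. Unset Strict Implicit. Unset Printing Implicit Defensive.
Import Order.TTheory GRing.Theory Num.Theory.
Local Open Scope ring_scope.

Section Defs.
Variable R : realType.

Definition simple_graph (V : finType) (E : rel V) : Prop :=
  symmetric E /\ irreflexive E.

Definition threshold_graph (V : finType) (E : rel V) : Prop :=
  simple_graph E /\
  exists (w : V -> R) (s : R),
    forall i j : V, i != j -> (s <= w i + w j <-> E i j).

Definition threshold_intersection_rep (V : finType) (E : rel V) (k : nat) : Prop :=
  (1 <= k)%N /\
  exists Es : 'I_k -> rel V,
    (forall i, threshold_graph (Es i)) /\
    (forall x y : V, E x y = [forall i, Es i x y]).

(* R ∪ {∞}, encoded as option R with None = ∞. *)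
Definition extR := option R.
Definition ext_add (a b : extR) : extR :=
  match a, b with Some x, Some y => Some (x + y) | _, _ => None end.
Definition ext_min (a b : extR) : extR :=
  match a, b with
  | Some x, Some y => Some (Num.min x y)
  | None, b => b
  | a, None => a
  end.
Definition ext_ge (a : extR) (t : R) : bool :=
  match a with Some x => t <= x | None => true end.

Definition trop_dot (k : nat) (u v : 'I_k -> extR) : extR :=
  \big[ext_min/None]_(i < k) ext_add (u i) (v i).

Definition trop_rep (V : finType) (E : rel V) (k : nat) : Prop :=
  (1 <= k)%N /\
  exists (f : V -> 'I_k -> extR) (t : R),
    0 < t /\
    forall x y : V, x != y -> (E x y <-> ext_ge (trop_dot (f x) (f y)) t).

End Defs.

Definition least_nat (P : nat -> Prop) (n : nat) : Prop :=
  P n /\ forall m, P m -> (n <= m)%N.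

(* A min-plus product f(x) ⊙ f(y) = min_i (f(x)_i + f(y)_i) is at least t iff
   every coordinate sum is, so a k-dimensional representation is the same as k
   graphs, the i-th joining x and y when f(x)_i + f(y)_i >= t.  Each such
   graph is a threshold graph (take the coordinates as weights, after replacing
   the infinite ones by a large real), and conversely the weights w and
   threshold s of a threshold graph give the coordinate w - s/2 + 1/2 for the
   threshold 1.  Hence the two parameters are the least elements of the same
   set of integers, which is nonempty: every graph is the intersection of the
   complete graphs with one non-edge removed. *)
From HB Require Import structures.
From mathcomp Require Import all_boot all_order all_algebra.
From mathcomp Require Import reals boolp lra.
Set Implicit Arguments. Unset Strict Implicit. Unset Printing Implicit Defensive.
Import Order.TTheory GRing.Theory Num.Theory.
Local Open Scope ring_scope.

Lemma least_nat_exists (P : nat -> Prop) m : P m -> exists n, least_nat P n.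
Proof.
move=> Pm; have exP : exists n, `[< P n >] by exists m; apply/asboolP.
case: (ex_minnP exP) => n /asboolP Pn n_min.
by exists n; split=> // k /asboolP; apply: n_min.
Qed.

Section TropicalDot.
Variable R : realType.

Lemma ext_addC (a b : extR R) : ext_add a b = ext_add b a.
Proof. by case: a => [x|]; case: b => [y|] //=; rewrite addrC. Qed.

Lemma ext_ge_min (t : R) :
  {morph (@ext_ge R)^~ t : a b / ext_min a b >-> a && b}.
Proof. by case=> [x|] [y|] //=; rewrite ?andbT // le_min. Qed.

Lemma ext_ge_trop_dot k (u v : 'I_k -> extR R) t :
  ext_ge (trop_dot u v) t = [forall i, ext_ge (ext_add (u i) (v i)) t].
Proof.
by rewrite /trop_dot (big_morph _ (ext_ge_min t) (erefl : ext_ge None t)) big_andE.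
Qed.

End TropicalDot.

Section ThresholdGraphs.
Variables (R : realType) (V : finType).

Definition trop_coord_graph (g : V -> extR R) (t : R) : rel V :=
  fun x y => (x != y) && ext_ge (ext_add (g x) (g y)) t.

Lemma threshold_graph_trop_coord_graph g t :
  threshold_graph R (trop_coord_graph g t).
Proof.
split.
  split; last by move=> x; rewrite /trop_coord_graph eqxx.
  by move=> x y; rewrite /trop_coord_graph eq_sym ext_addC.
pose S := \sum_(x : V) `|odflt 0 (g x)|.
have g_ge x a : g x = Some a -> - S <= a.
  move=> gx; have : `|a| <= S.
    by rewrite /S (bigD1 x) //= gx lerDl sumr_ge0.
  have : - a <= `|a| by rewrite -normrN ler_norm.
  lra.
have t_le : t <= `|t| := ler_norm t.
(* an infinite coordinate is joined to everything: give it weight |t| + S *)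
exists (fun x => odflt (`|t| + S) (g x)), t => x y nxy.
rewrite /trop_coord_graph nxy /=.
have S_ge0 : 0 <= S by apply: sumr_ge0.
case gx: (g x) => [a|]; case gy: (g y) => [b|] //=; split=> // _.
- by have := g_ge _ _ gx; lra.
- by have := g_ge _ _ gy; lra.
- by have := normr_ge0 t; lra.
Qed.

Lemma threshold_graph_trop_coord (E : rel V) :
  threshold_graph R E ->
  exists g : V -> extR R,
    forall x y, x != y -> (E x y <-> ext_ge (ext_add (g x) (g y)) 1).
Proof.
case=> _ [w [s Hws]].
exists (fun x => Some (w x - s / 2 + 1 / 2)) => x y nxy /=.
rewrite -(Hws x y nxy); split; lra.
Qed.

Definition minus_edge (u v : V) : rel V :=
  fun x y => (x != y) && ~~ ((x \in [:: u; v]) && (y \in [:: u; v])).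

Lemma threshold_graph_complete : threshold_graph R (fun x y : V => x != y).
Proof.
split; first by split=> [x y|x]; rewrite ?eqxx // eq_sym.
by exists (fun=> 0), 0 => x y ->; rewrite addr0.
Qed.

Lemma threshold_graph_minus_edge u v : threshold_graph R (minus_edge u v).
Proof.
split.
  split; last by move=> x; rewrite /minus_edge eqxx.
  by move=> x y; rewrite /minus_edge eq_sym [(y \in _) && _]andbC.
exists (fun z => if z \in [:: u; v] then 0 else 1), 1 => x y nxy.
rewrite /minus_edge nxy /=.
by case: (x \in _); case: (y \in _); rewrite ?addr0 ?add0r; split=> //; lra.
Qed.

Variable E : rel V.

Lemma threshold_intersection_rep_card (I : finType) (G : I -> rel V) :
  (0 < #|I|)%N -> (forall i, threshold_graph R (G i)) ->
  (forall x y, E x y = [forall i, G i x y]) ->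
  threshold_intersection_rep R E #|I|.
Proof.
move=> I_gt0 thrG EG; split=> //; exists (fun j => G (enum_val j)).
split=> [j|x y]; first exact: thrG.
rewrite EG; apply/forallP/forallP => [H j|H i]; first exact: H.
by rewrite -(enum_rankK i); apply: H.
Qed.

Lemma threshold_intersection_rep_exists :
  simple_graph E -> exists k, threshold_intersection_rep R E k.
Proof.
case=> Esym Eirr.
pose G (o : option {p : V * V | ~~ E p.1 p.2}) : rel V :=
  if o is Some p then minus_edge (val p).1 (val p).2 else fun x y => x != y.
exists #|{: option {p : V * V | ~~ E p.1 p.2}}|.
apply: (threshold_intersection_rep_card (G := G)).
- by apply/card_gt0P; exists None.
- case=> [p|]; first exact: threshold_graph_minus_edge.
  exact: threshold_graph_complete.
move=> x y; have [<-|nxy] := eqVneq x y.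
  by rewrite Eirr; apply/esym/forallPn; exists None; rewrite /= eqxx.
case Exy: (E x y).
  apply/esym/forallP => [[[[u v] /= nEuv]|]] //=; rewrite /minus_edge nxy /=.
  (* both ends of the edge xy in {u, v} would make uv that edge *)
  apply: contra nEuv; rewrite !inE.
  case/andP=> /orP[] /eqP xE /orP[] /eqP yE; move: nxy Exy;
    by rewrite xE yE ?eqxx // Esym.
apply/esym/forallPn; exists (Some (exist _ (x, y) (negbT Exy))).
by rewrite /= /minus_edge nxy !inE !eqxx orbT.
Qed.

Lemma threshold_intersection_rep_trop_rep k :
  threshold_intersection_rep R E k -> trop_rep R E k.
Proof.
case=> k_gt0 [Es [thrEs EEs]]; split=> //.
have /fin_all_exists [g Hg] := fun i => threshold_graph_trop_coord (thrEs i).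
exists (fun x i => g i x), 1; split=> // x y nxy.
rewrite EEs ext_ge_trop_dot.
by split=> /forallP H; apply/forallP => i; apply/(Hg i x y nxy).
Qed.

Lemma trop_rep_threshold_intersection_rep k :
  irreflexive E -> trop_rep R E k -> threshold_intersection_rep R E k.
Proof.
move=> Eirr [k_gt0 [f [t [_ Hf]]]]; split=> //.
exists (fun i => trop_coord_graph (fun x => f x i) t); split.
  by move=> i; apply: threshold_graph_trop_coord_graph.
move=> x y; have [<-|nxy] := eqVneq x y.
  rewrite Eirr; apply/esym/forallPn; exists (Ordinal k_gt0).
  by rewrite /trop_coord_graph eqxx.
rewrite /trop_coord_graph nxy; apply/idP/idP.
  by move=> /(Hf _ _ nxy); rewrite ext_ge_trop_dot.
by move=> H; apply/(Hf _ _ nxy); rewrite ext_ge_trop_dot.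
Qed.

End ThresholdGraphs.

Theorem mainTheorem8 (R : realType) (V : finType) (E : rel V) :
  simple_graph E ->
  exists n : nat,
    least_nat (threshold_intersection_rep R E) n /\
    least_nat (trop_rep R E) n.
Proof.
move=> simpleE; have [k Hk] := threshold_intersection_rep_exists R simpleE.
have [n [Hn n_min]] := least_nat_exists Hk.
exists n; split; first by [].
split; first exact: threshold_intersection_rep_trop_rep.
by move=> m /(trop_rep_threshold_intersection_rep simpleE.2) /n_min.
Qed.
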